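(* Let $\Sigma$ be a finite alphabet and let $L\subseteq\Sigma^*$ be the language of unique Eulerian trails. Let $L''\subseteq\Sigma^*$ be the set of words $r$ of one of the two forms (a) $r=axbzayb$ with $a,b\in\Sigma$, $a\neq b$, $x,y,z\in\Sigma^*$, or (b) $r=axaya$ with $a\in\Sigma$, $x,y\in\Sigma^*$ (and $z=\epsilon$ in the conditions below), satisfying: (1) $x\neq\epsilon$ or $y\neq\epsilon$; (2) $x,y,z\in L$; (3) none of $x,y,z$ contains the letter $a$ or the letter $b$, and no two of $x,y,z$ contain a common letter. Then $L''$ equals the set of minimal forbidden words of $L$.
   Context: For a word $t=t_1\cdots t_n$ over $\Sigma$ (viewed as a vertex set), $G(t)$ is the directed multigraph on $\Sigma$ with one edge $t_i\to t_{i+1}$ for each $1\le i<n$; a word $s=s_1\cdots s_k$ is an Eulerian trail of $G(t)$ if the multiset of pairs $\{(s_i,s_{i+1}):1\le i<k\}$ equals the multiset $\{(t_i,t_{i+1}):1\le i<n\}$. The language $L$ consists of the empty word $\epsilon$ together with all nonempty words $t$ such that no word $s\neq t$ with $s_1=t_1$ is an Eulerian trail of $G(t)$. A word $r$ is a minimal forbidden word of $L$ if $r\notin L$ while every proper factor (contiguous subword) of $r$ belongs to $L$. *)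

From mathcomp Require Import all_boot.
Set Implicit Arguments. Unset Strict Implicit. Unset Printing Implicit Defensive.

Definition edges (T : eqType) (t : seq T) : seq (T * T) := zip t (behead t).

Definition eulerian_trail (T : eqType) (s t : seq T) : Prop :=
  perm_eq (edges s) (edges t).

Definition inL (T : eqType) (t : seq T) : Prop :=
  t = [::] \/
  (t <> [::] /\
   forall s : seq T, s <> [::] -> ohead s = ohead t ->
     eulerian_trail s t -> s = t).

Definition min_forbidden (T : eqType) (r : seq T) : Prop :=
  ~ inL r /\ forall u : seq T, infix u r -> u <> r -> inL u.

Definition disj (T : eqType) (x y : seq T) : Prop := forall c, c \in x -> c \notin y.

Definition inL2 (T : eqType) (r : seq T) : Prop :=
  (exists (a b : T) (x y z : seq T),
      a <> b /\ r = a :: x ++ b :: z ++ a :: y ++ [:: b] /\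
      (x <> [::] \/ y <> [::]) /\
      inL x /\ inL y /\ inL z /\
      a \notin x /\ a \notin y /\ a \notin z /\
      b \notin x /\ b \notin y /\ b \notin z /\
      disj x y /\ disj x z /\ disj y z)
  \/
  (exists (a : T) (x y : seq T),
      r = a :: x ++ a :: y ++ [:: a] /\
      (x <> [::] \/ y <> [::]) /\
      inL x /\ inL y /\
      a \notin x /\ a \notin y /\
      disj x y).

From mathcomp Require Import all_boot zify.
From Stdlib Require Import Classical.
Set Implicit Arguments. Unset Strict Implicit. Unset Printing Implicit Defensive.

(* A word of L'' is not in L because swapping its two inner blocks
   (a x b z a y b |-> a y b z a x b, a x a y a |-> a y a x a) gives another
   trail with the same start and the same edges; its two maximal proper factors
   are in L because L is closed under concatenation of words over disjoint
   alphabets and under closing a word by a fresh letter on both sides.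
   Conversely, let t = a d ... be minimal forbidden and s = a e ... a competing
   trail; minimality forces d <> e.  All blocks between consecutive occurrences
   of a except the last one coincide (otherwise a Y a X a would be a shorter
   forbidden factor), so a has only two successors in t.  Either t ends with its
   last a, and t = a Y a X a, or s has to leave the segment after the last a
   through a letter u of the block X before it, and t = a X1 u X2 a Z1 u.  Every
   violation of the side conditions of L'' then exhibits a shorter forbidden
   factor. *)

Section Edges.
Variable T : eqType.
Implicit Types (a c e u v x y : T) (s t w p q M X Z : seq T).

Lemma edges_cons2 x y w : edges (x :: y :: w) = (x, y) :: edges (y :: w).
Proof. by []. Qed.

Lemma edges_cons_cat x p q :
  edges (x :: p ++ q) = edges (x :: p) ++ edges (last x p :: q).
Proof. by elim: p x => [|y p IHp] x //; rewrite cat_cons !edges_cons2 IHp. Qed.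

Lemma edges_cat_cons p c w : edges (p ++ c :: w) = edges (p ++ [:: c]) ++ edges (c :: w).
Proof.
case: p => [|x p] //; rewrite !cat_cons edges_cons_cat.
by rewrite (edges_cons_cat x p [:: c]) -catA.
Qed.

Lemma edges_cat_block M a X Z :
  edges (M ++ a :: X ++ a :: Z) = edges (M ++ a :: X ++ [:: a]) ++ edges (a :: Z).
Proof. by rewrite -cat_cons catA edges_cat_cons -catA. Qed.

Lemma edges_bridge x w y w' :
  edges (x :: w ++ y :: w') = edges (x :: w) ++ (last x w, y) :: edges (y :: w').
Proof. exact: edges_cons_cat. Qed.

Lemma map_fst_edges x w : map fst (edges (x :: w)) = belast x w.
Proof. by elim: w x => [|y w IHw] x //; rewrite edges_cons2 /= IHw. Qed.

Lemma map_snd_edges x w : map snd (edges (x :: w)) = w.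
Proof. by elim: w x => [|y w IHw] x //; rewrite edges_cons2 /= IHw. Qed.

Lemma mem_edges_src u v x w : (u, v) \in edges (x :: w) -> u \in belast x w.
Proof. by move=> uv; rewrite -map_fst_edges; apply/mapP; exists (u, v). Qed.

Lemma mem_edges_tgt u v x w : (u, v) \in edges (x :: w) -> v \in w.
Proof. by move=> uv; rewrite -(map_snd_edges x w); apply/mapP; exists (u, v). Qed.

Lemma mem_edges u v w : (u, v) \in edges w -> u \in w /\ v \in w.
Proof.
case: w => [|x w] // uv; split; last by rewrite inE (mem_edges_tgt uv) orbT.
exact/mem_belast/(mem_edges_src uv).
Qed.

Lemma first_edge_prefix x y w p q : x :: y :: w = p ++ q -> 1 < size p ->
  (x, y) \in edges p.
Proof. by case: p => [|x' [|y' p]] //= [-> -> _]; rewrite edges_cons2 mem_head. Qed.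

Lemma perm_edges_cons x s w : perm_eq (edges (x :: s)) (edges (x :: w)) ->
  perm_eq s w /\ last x s = last x w.
Proof.
move=> sw; have tgt := perm_map snd sw; rewrite !map_snd_edges in tgt.
split=> //; have src := perm_map fst sw; rewrite !map_fst_edges in src.
have : perm_eq (belast x s ++ [:: last x s]) (belast x s ++ [:: last x w]).
  by rewrite perm_sym (perm_catr _ src) perm_sym !cats1 -!lastI perm_cons.
rewrite perm_cat2l => /perm_mem/(_ (last x s)).
by rewrite !inE eqxx => /esym/eqP.
Qed.

Lemma perm_edges_infix p x s w q : perm_eq (edges (x :: s)) (edges (x :: w)) ->
  perm_eq (edges (p ++ x :: s ++ q)) (edges (p ++ x :: w ++ q)).
Proof.
move=> sw; have [_ last_sw] := perm_edges_cons sw.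
rewrite (edges_cat_cons p x (s ++ q)) (edges_cat_cons p x (w ++ q)) perm_cat2l.
by rewrite !edges_cons_cat last_sw perm_cat2r.
Qed.

Lemma exit_edge (S : pred T) x w : S x -> ~~ all S w ->
  exists u v, [/\ (u, v) \in edges (x :: w), S u & ~~ S v].
Proof.
elim: w x => [|y w IHw] x //= Sx; rewrite negb_and => /orP[Sy | /(IHw y)].
  by exists x, y; rewrite edges_cons2 mem_head.
case Sy: (S y) => IH; last by exists x, y; rewrite edges_cons2 mem_head Sy.
have [u [v [uv Su Sv]]] := IH isT.
by exists u, v; rewrite edges_cons2 in_cons uv orbT.
Qed.

Lemma succ_fresh a w v : a \notin w -> (a, v) \in edges (a :: w) -> v = head a w.
Proof.
case: w => [|y w] // aw; rewrite edges_cons2 inE => /orP[/eqP[] // | /mem_edges_src].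
by move/mem_belast; rewrite (negbTE aw).
Qed.

Lemma succ_cycle a X v : a \notin X -> (a, v) \in edges (a :: X ++ [:: a]) ->
  v = head a X.
Proof.
case: X => [|x X aX]; first by rewrite inE => _ /eqP[].
rewrite cat_cons edges_cons2 inE => /orP[/eqP[] // | /mem_edges_src].
by rewrite cats1 belast_rcons (negbTE aX).
Qed.

(* To come back to a, the walk e :: s has to leave Z, and the only edges of t
   leaving letters of Z lie in the block a X a. *)
Lemma shared_letter t a e s M X Z :
  {subset edges (e :: s) <= edges t} -> t = M ++ a :: X ++ a :: Z ->
  {subset edges (M ++ a :: X ++ [:: a]) <= edges (a :: X ++ [:: a])} ->
  a \notin Z -> e \in Z -> a \in s -> exists2 u, u \in X & u \in Z.
Proof.
move=> st Et sub aZ eZ a_s.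
have : ~~ all [in Z] s by apply/negP => /allP /(_ a a_s); apply/negP.
case/(exit_edge eZ) => u [v [uv uZ vZ]]; exists u => //.
move: (st _ uv); rewrite Et edges_cat_block mem_cat.
case/orP => [/sub /mem_edges_src | /mem_edges_tgt vZ']; last by case/negP: vZ.
rewrite cats1 belast_rcons inE => /orP [/eqP ua | //].
by case/negP: aZ; rewrite -ua.
Qed.

End Edges.

Lemma perm_cat_sep (S : eqType) (P : pred S) A B A' B' :
  all (predC P) A -> all (predC P) A' -> all P B -> all P B' ->
  perm_eq (A ++ B) (A' ++ B') -> perm_eq A A' /\ perm_eq B B'.
Proof.
have filter_nil (Q : pred S) l : ~~ has Q l -> filter Q l = [::].
  by rewrite has_filter negbK => /eqP.
move=> nPA nPA' PB PB' AB; split.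
  have := perm_filter (predC P) AB.
  rewrite !filter_cat (all_filterP nPA) (all_filterP nPA') !filter_nil ?cats0 //;
    by rewrite has_predC ?PB ?PB'.
have := perm_filter P AB.
by rewrite !filter_cat (all_filterP PB) (all_filterP PB') !filter_nil // -all_predC.
Qed.

Section Words.
Variable T : eqType.
Implicit Types (a c g : T) (w M X Y Z W : seq T).

Lemma split_first c X : c \in X -> exists X1 X2, X = X1 ++ c :: X2 /\ c \notin X1.
Proof.
elim: X => [|y X IHX] //; rewrite inE; case: (eqVneq c y) => [<- _ | cy /= cX].
  by exists [::], X.
have [X1 [X2 [-> cX1]]] := IHX cX; exists (y :: X1), X2.
by rewrite inE negb_or cy.
Qed.

Lemma split_last c X : c \in X -> exists X1 X2, X = X1 ++ c :: X2 /\ c \notin X2.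
Proof.
rewrite -mem_rev => /split_first [X1 [X2 [EX cX1]]]; exists (rev X2), (rev X1).
by rewrite -[X]revK EX rev_cat rev_cons cat_rcons mem_rev.
Qed.

Lemma notin_cat_cons c X1 g X2 : c \notin X1 ++ g :: X2 ->
  [/\ c \notin X1, c != g & c \notin X2].
Proof. by rewrite mem_cat inE !negb_or => /and3P. Qed.

Lemma split_last_block a M : head a M = a -> M != [::] ->
  exists M' Y, [/\ M = M' ++ a :: Y, head a M' = a & a \notin Y].
Proof.
move=> hM M0; have /split_last [M' [Y [EM aY]]] : a \in M.
  by case: M hM M0 => // m M /= ->; rewrite mem_head.
by exists M', Y; split=> //; rewrite -hM EM; case: (M').
Qed.

Lemma last_two_occurrences a w : a \in w -> exists M X Z,
  [/\ a :: w = M ++ a :: X ++ a :: Z, head a M = a, a \notin X & a \notin Z].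
Proof.
move=> /split_last [P [Z [-> aZ]]].
have [M [X [EaP hM aX]]] := @split_last_block a (a :: P) erefl isT.
by exists M, X, Z; split=> //; rewrite -cat_cons EaP -catA.
Qed.

Lemma cat_sep_inj c X Z W W' : c \notin X -> c \notin Z ->
  X ++ c :: W = Z ++ c :: W' -> X = Z.
Proof.
move=> cX cZ E; have := congr1 (index c) E.
rewrite !index_cat (negbTE cX) (negbTE cZ) /= eqxx !addn0 => eq_size.
by rewrite -(take_size_cat (c :: W) (erefl (size X))) E eq_size take_size_cat.
Qed.

Lemma disjE X Y : disj X Y <-> ~~ has [in X] Y.
Proof.
rewrite has_sym; split=> [XY | /hasPn XY c /XY //].
by apply/hasPn => c /XY.
Qed.

Lemma disj_neq X Y : X <> [::] \/ Y <> [::] -> disj X Y -> X <> Y.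
Proof.
move=> XY0 dXY eXY; subst X.
by case: Y XY0 dXY => [[] // | g Y _ /(_ g (mem_head g Y))]; rewrite mem_head.
Qed.

Lemma disjC X Y : disj X Y -> disj Y X.
Proof. by move=> dXY c cY; apply: contraL cY; apply: dXY. Qed.

Lemma neq_nil X Y : X <> Y -> X <> [::] \/ Y <> [::].
Proof. by case: X => [|g X] XY; [right => Y0; apply: XY | left]. Qed.

End Words.

Section UniqueTrails.
Variable T : eqType.
Implicit Types (c d x y : T) (s w p q u X Y Z : seq T).

Definition unique_trail x w :=
  forall s, perm_eq (edges (x :: s)) (edges (x :: w)) -> s = w.

Lemma inL_cons x w : inL (x :: w) <-> unique_trail x w.
Proof.
split=> [[// | [_ uniq_xw]] s sw | uniq_xw].
  by have [] // := uniq_xw (x :: s) (fun e => ltac:(discriminate)) erefl sw.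
by right; split=> // [[|y s]] // _ [->] sw; rewrite (uniq_xw s sw).
Qed.

Lemma inL1 c : inL [:: c].
Proof. by apply/inL_cons => -[|y s] // /perm_size. Qed.

Lemma notinL_witness x w : ~ inL (x :: w) ->
  exists2 s, perm_eq (edges (x :: s)) (edges (x :: w)) & s <> w.
Proof.
move=> notL; apply: NNPP => no_s; apply: notL; apply/inL_cons => s sw.
by apply: NNPP => ne; apply: no_s; exists s.
Qed.

Lemma inL_infix u w : infix u w -> inL w -> inL u.
Proof.
case: u => [_ _ | x u]; first by left.
move=> /infixP [p [q ->]] [|[_ uniq_w]]; first by case: p.
apply/inL_cons => s su.
have [/perm_size size_su _] := perm_edges_cons su.
have /eqP : p ++ x :: s ++ q = p ++ x :: u ++ q.
  by apply: uniq_w; [case: p | case: p | exact: perm_edges_infix].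
by rewrite eqseq_cat // eqxx eqseq_cons eqxx /= eqseq_cat // => /andP [/eqP].
Qed.

Lemma notinL_interleaved c X d Y Z :
  X ++ d :: Y ++ c :: Z <> Z ++ d :: Y ++ c :: X ->
  ~ inL (c :: X ++ d :: Y ++ c :: Z ++ [:: d]).
Proof.
move=> neXZ /inL_cons /(_ (Z ++ d :: Y ++ c :: X ++ [:: d])) swap.
have blocks U V : edges (c :: U ++ d :: Y ++ c :: V ++ [:: d]) =
    edges (c :: U ++ [:: d]) ++ edges (d :: Y ++ [:: c]) ++ edges (c :: V ++ [:: d]).
  by rewrite (edges_cat_cons (c :: U)) (edges_cat_cons (d :: Y)).
apply: neXZ; apply: (@rcons_injl _ d); rewrite -!cats1 -!catA /= -!catA /=.
by rewrite swap // !blocks perm_catC -catA perm_catCA.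
Qed.

Lemma notinL_triple c X Z : X ++ c :: Z <> Z ++ c :: X ->
  ~ inL (c :: X ++ c :: Z ++ [:: c]).
Proof.
move=> neXZ /inL_cons /(_ (Z ++ c :: X ++ [:: c])) swap.
have blocks U V : edges (c :: U ++ c :: V ++ [:: c]) =
    edges (c :: U ++ [:: c]) ++ edges (c :: V ++ [:: c]).
  by rewrite (edges_cat_cons (c :: U)).
apply: neXZ; apply: (@rcons_injl _ c); rewrite -!cats1 -!catA /=.
by rewrite swap // !blocks perm_catC.
Qed.

Lemma notinL_interleaved_sep c X d Y Z : d \notin X -> d \notin Z -> X <> Z ->
  ~ inL (c :: X ++ d :: Y ++ c :: Z ++ [:: d]).
Proof. by move=> dX dZ neXZ; apply: notinL_interleaved => /cat_sep_inj -/(_ dX dZ). Qed.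

Lemma notinL_triple_sep c X Z : c \notin X -> c \notin Z -> X <> Z ->
  ~ inL (c :: X ++ c :: Z ++ [:: c]).
Proof. by move=> cX cZ neXZ; apply: notinL_triple => /cat_sep_inj -/(_ cX cZ). Qed.

End UniqueTrails.

Section Closure.
Variable T : eqType.
Implicit Types (c h k x y : T) (r s u v : seq T).

Lemma bridge_split h u k v s1 s2 : disj (h :: u) (k :: v) -> k \notin s1 ->
  {subset edges (h :: s1 ++ k :: s2) <= edges (h :: u ++ k :: v)} ->
  all [predC k :: v] s1 /\ all [in k :: v] s2.
Proof.
move=> disj_uv k_s1 sub; pose B := k :: v.
have u_notB y : y \in h :: u -> y \notin B := disj_uv y.
have edge_t y1 y2 : (y1, y2) \in edges (h :: s1 ++ k :: s2) ->
    [\/ y1 \notin B /\ y2 \notin B, y2 = k | y1 \in B /\ y2 \in B].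
  move/sub; rewrite edges_bridge mem_cat inE.
  case/orP => [/mem_edges [/u_notB ? /u_notB ?] | /orP [/eqP [_ ->] | /mem_edges]].
  - by constructor 1.
  - by constructor 2.
  - by constructor 3.
split.
  apply: contraT => /(exit_edge (S := [predC B]) (u_notB h (mem_head h u))).
  case=> x [y [xy xB /negPn yB]].
  have : (x, y) \in edges (h :: s1 ++ k :: s2) by rewrite edges_bridge mem_cat xy.
  case/edge_t => [[_ /negP //] | yk | [xB' _]]; last by case/negP: xB.
  by move: k_s1; rewrite -yk (mem_edges_tgt xy).
apply: contraT => /(exit_edge (S := [in B]) (mem_head k v)) [x [y [xy xB yB]]].
have : (x, y) \in edges (h :: s1 ++ k :: s2).
  by rewrite edges_bridge mem_cat inE xy !orbT.
case/edge_t => [[/negP //] | yk | [_ yB']]; last by case/negP: yB.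
by move: yB; rewrite yk mem_head.
Qed.

(* No edge of u ++ v leads from the alphabet of v back to that of u, so a
   competing trail splits at its first k into a trail of u and one of v. *)
Lemma inL_cat u v : inL u -> inL v -> disj u v -> inL (u ++ v).
Proof.
case: u => [|h u] //; case: v => [|k v]; first by rewrite cats0.
move=> /inL_cons uniq_u /inL_cons uniq_v disj_uv.
rewrite cat_cons; apply/inL_cons => s st.
have [s_perm _] := perm_edges_cons st.
have /split_first [s1 [s2 [Es k_s1]]] : k \in s.
  by rewrite (perm_mem s_perm) mem_cat mem_head orbT.
subst s; have [s1_notB s2_B] : all [predC k :: v] s1 /\ all [in k :: v] s2.
  by apply: bridge_split disj_uv k_s1 _ => e; rewrite (perm_mem st).
rewrite !edges_bridge in st.
have [perm_u perm_v] : perm_eq (edges (h :: s1)) (edges (h :: u)) /\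
    perm_eq ((last h s1, k) :: edges (k :: s2)) ((last h u, k) :: edges (k :: v)).
  apply: (perm_cat_sep (P := fun e : T * T => e.2 \in k :: v)) st.
  - by apply/allP => -[x y] /mem_edges_tgt /(allP s1_notB).
  - by apply/allP => -[x y] /mem_edges_tgt yu; apply: disj_uv; rewrite inE yu orbT.
  - by rewrite /= mem_head; apply/allP => -[x y] /mem_edges_tgt /(allP s2_B).
  - by rewrite /= mem_head; apply/allP => -[x y] /mem_edges_tgt yv; rewrite inE yv orbT.
by move: perm_v; rewrite (uniq_u s1 perm_u) perm_cons => /uniq_v ->.
Qed.

Lemma inL_cycle c v : inL v -> c \notin v -> inL (c :: v ++ [:: c]).
Proof.
move=> Lv cv; have : inL (v ++ [:: c]).
  by apply: inL_cat Lv (inL1 c) _ => y yv; rewrite inE; apply: contraNneq cv => <-.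
have succ y : (c, y) \in edges (c :: v ++ [:: c]) -> y = head c v := succ_cycle cv.
case Ev: (v ++ [:: c]) succ => [|y' w] succ; first by case: v Ev {succ Lv cv}.
move=> /inL_cons uniq_w; apply/inL_cons => -[/perm_size // | y s] sw.
have cy : (c, y) \in edges (c :: y' :: w) by rewrite -(perm_mem sw) edges_cons2 mem_head.
have cy' : (c, y') \in edges (c :: y' :: w) by rewrite edges_cons2 mem_head.
rewrite (succ y cy) -(succ y' cy') !edges_cons2 perm_cons in sw *.
by move/uniq_w: sw => ->.
Qed.

Lemma infix_proper u x r : infix u (x :: r) -> u <> x :: r ->
  infix u r \/ infix u (belast x r).
Proof.
move=> /infixP [[|y p] [q Exr]] ne; last first.
  by left; case: Exr => _ ->; apply/infixP; exists p, q.
right; case/lastP: q Exr => [|q z] Exr; first by case: ne; rewrite Exr cats0.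
have /rcons_inj [-> _] : rcons (belast x r) (last x r) = rcons (u ++ q) z.
  by rewrite -lastI Exr rcons_cat.
exact: prefix_infix.
Qed.

Lemma min_forbidden_of_ends x r :
  ~ inL (x :: r) -> inL r -> inL (belast x r) -> min_forbidden (x :: r).
Proof. by move=> notL Lr Lb; split=> // u /infix_proper uxr /uxr [] /inL_infix; apply. Qed.

End Closure.

Section ForbiddenShapes.
Variable T : eqType.
Implicit Types (a b : T) (x y z : seq T).

Lemma triple_min_forbidden a x y :
  x <> [::] \/ y <> [::] -> inL x -> inL y ->
  a \notin x -> a \notin y -> disj x y ->
  min_forbidden (a :: x ++ a :: y ++ [:: a]).
Proof.
move=> xy0 Lx Ly ax ay dxy; have /disjE/negbTE hxy := dxy.
apply: min_forbidden_of_ends.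
- exact: notinL_triple_sep ax ay (disj_neq xy0 dxy).
- apply: inL_cat Lx (inL_cycle Ly ay) _; apply/disjE.
  by rewrite /= has_cat /= (negbTE ax) hxy.
- have -> : x ++ a :: y ++ [:: a] = rcons (x ++ a :: y) a by rewrite -cats1 -catA.
  have -> : belast a (rcons (x ++ a :: y) a) = (a :: x ++ [:: a]) ++ y.
    by rewrite belast_rcons /= -[in RHS]catA.
  apply: inL_cat (inL_cycle Lx ax) Ly _; apply/disjE.
  by rewrite has_sym /= has_cat /= (negbTE ay) has_sym hxy.
Qed.

Lemma interleaved_min_forbidden a b x y z : a != b ->
  x <> [::] \/ y <> [::] -> inL x -> inL y -> inL z ->
  a \notin x -> a \notin y -> a \notin z ->
  b \notin x -> b \notin y -> b \notin z ->
  disj x y -> disj x z -> disj y z ->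
  min_forbidden (a :: x ++ b :: z ++ a :: y ++ [:: b]).
Proof.
move=> ab xy0 Lx Ly Lz ax ay az bx by_ bz dxy dxz dyz.
have /disjE/negbTE hxy := dxy; have /disjE/negbTE hxz := dxz.
have /disjE/negbTE hyz := dyz.
apply: min_forbidden_of_ends.
- exact: notinL_interleaved_sep bx by_ (disj_neq xy0 dxy).
- have -> : x ++ b :: z ++ a :: y ++ [:: b] = x ++ b :: (z ++ a :: y) ++ [:: b].
    by rewrite -catA.
  apply: inL_cat Lx (inL_cycle (inL_cat Lz (inL_cat (inL1 a) Ly _) _) _) _.
  + by apply/disjE; rewrite has_sym /= (negbTE ay).
  + by apply/disjE; rewrite /= (negbTE az) has_sym hyz.
  + by rewrite !mem_cat !inE (negbTE bz) (negbTE by_) eq_sym (negbTE ab).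
  + by apply/disjE; rewrite /= !has_cat /= (negbTE bx) (negbTE ax) hxz hxy.
- have -> : x ++ b :: z ++ a :: y ++ [:: b] = rcons ((x ++ b :: z) ++ a :: y) b.
    by rewrite -cats1 -!catA.
  have -> : belast a (rcons ((x ++ b :: z) ++ a :: y) b) = (a :: (x ++ b :: z) ++ [:: a]) ++ y.
    by rewrite belast_rcons /= -[in RHS]catA.
  apply: inL_cat (inL_cycle (inL_cat Lx (inL_cat (inL1 b) Lz _) _) _) Ly _.
  + by apply/disjE; rewrite has_sym /= (negbTE bz).
  + by apply/disjE; rewrite /= (negbTE bx) hxz.
  + by rewrite !mem_cat !inE (negbTE ax) (negbTE az) (negbTE ab).
  + by apply/disjE; rewrite has_sym /= !has_cat /= (negbTE ay) (negbTE by_) has_sym hxy hyz.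
Qed.

Lemma inL2_min_forbidden (r : seq T) : inL2 r -> min_forbidden r.
Proof.
case=> [[a [b [x [y [z [/eqP ab [-> [xy0 [Lx [Ly [Lz [ax [ay [az [bx [by_ [bz H]]]]]]]]]]]]]]]]]
      | [a [x [y [-> [xy0 [Lx [Ly [ax [ay dxy]]]]]]]]]].
- by case: H => dxy [dxz dyz]; exact: interleaved_min_forbidden.
- exact: triple_min_forbidden.
Qed.

End ForbiddenShapes.

Ltac cat_norm := repeat rewrite /= -!catA.

Section MinimalForbidden.
Variable T : eqType.
Implicit Types (a b d e g u : T) (p q s w v M N P Q X Y Z x y z : seq T).
Variable t : seq T.
Hypothesis t_min : forall v, infix v t -> v <> t -> inL v.

Lemma factor_inL p v q : t = p ++ v ++ q -> p ++ q != [::] -> inL v.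
Proof.
move=> Et pq; apply: t_min; first by rewrite Et infix_infix.
have : 0 < size (p ++ q) by case: (p ++ q) pq.
by rewrite Et size_cat => pq_gt0 /(congr1 size); rewrite !size_cat; lia.
Qed.

Lemma forbidden_factor p v q : t = p ++ v ++ q -> ~ inL v -> p = [::] /\ q = [::].
Proof.
move=> Et notL; have [| pq] := eqVneq (p ++ q) [::]; first by case: p q {Et} => [|? ?] [|? ?].
by case: notL; apply: factor_inL Et pq.
Qed.

(* Consecutive a-blocks before the last one coincide, since a Y a X a with
   Y <> X would be a shorter forbidden factor. *)
Lemma block_edges a M X Z : t = M ++ a :: X ++ a :: Z -> head a M = a ->
  a \notin X -> Z != [::] ->
  {subset edges (M ++ a :: X ++ [:: a]) <= edges (a :: X ++ [:: a])}.
Proof.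
have [n] := ubnP (size M); elim: n M Z => // n IHn M Z ltMn Et hM aX Z0.
have [-> // | M0] := eqVneq M [::].
have [M' [Y [EM hM' aY]]] := split_last_block hM M0.
have EY : Y = X.
  apply/eqP; apply: contraT => /eqP YX; case: (notinL_triple_sep aY aX YX).
  apply: (factor_inL (p := M') (q := Z)); first by rewrite Et EM; cat_norm.
  by case: (M').
subst Y; rewrite EM -catA /= edges_cat_block => e.
rewrite mem_cat => /orP [| //]; apply: (IHn M' (X ++ a :: Z) _ _ hM' aX).
- by move: ltMn; rewrite EM size_cat /=; lia.
- by rewrite Et EM; cat_norm.
- by case: (X).
Qed.

(* t is read both as a x b .. y b and as a x .. a y b: the interleaved shape
   has N1 = z ++ [:: a] and N2 = b :: z, the triple shape has b = a and
   N1 = N2 = [::]. *)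
Lemma disj_blocks a b x y N1 N2 :
  t = a :: x ++ b :: N1 ++ y ++ [:: b] -> t = a :: x ++ N2 ++ a :: y ++ [:: b] ->
  a \notin x -> a \notin y -> b \notin x -> b \notin y -> x <> y -> disj x y.
Proof.
move=> Et1 Et2 ax ay bx by_ xy g gx; apply/negP => gy.
have [P [P' [Ex gP]]] := split_first gx; have [Q [Q' [Ey gQ]]] := split_first gy.
have [PQ | /eqP PQ] := eqVneq P Q.
- subst Q; have P'Q' : P' <> Q' by move=> E; apply: xy; rewrite Ex Ey E.
  move: bx by_; rewrite Ex Ey => /notin_cat_cons [_ _ bP'] /notin_cat_cons [_ _ bQ'].
  apply: (notinL_interleaved_sep (c := g) (Y := N1 ++ P) bP' bQ' P'Q').
  by apply: (factor_inL (p := a :: P) (q := [::])); first by rewrite Et1 Ex Ey; cat_norm.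
- apply: (notinL_interleaved_sep (c := a) (Y := P' ++ N2) gP gQ PQ).
  apply: (factor_inL (p := [::]) (q := Q' ++ [:: b])); first by rewrite Et2 Ex Ey; cat_norm.
  by case: (Q').
Qed.

Lemma triple_inL2 a x y : t = a :: x ++ a :: y ++ [:: a] ->
  a \notin x -> a \notin y -> x <> y -> inL2 t.
Proof.
move=> Et ax ay xy; right; exists a, x, y.
have Lx : inL x by apply: (factor_inL (p := [:: a]) (q := a :: y ++ [:: a])).
have Ly : inL y.
  by apply: (factor_inL (p := a :: x ++ [:: a]) (q := [:: a])); first by rewrite Et; cat_norm.
have := disj_blocks (N1 := [::]) (N2 := [::]) Et Et ax ay ax ay xy.
by have := neq_nil xy; do !split.
Qed.

Section InterleavedShape.
Variables (a b : T) (x z y : seq T).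
Hypothesis Et : t = a :: x ++ b :: z ++ a :: y ++ [:: b].
Hypotheses (ab : a != b) (ax : a \notin x) (az : a \notin z) (ay : a \notin y).
Hypotheses (bx : b \notin x) (by_ : b \notin y).

Lemma interleaved_notin_mid : b \notin z.
Proof.
apply/negP => /split_first [z1 [z2 [Ez bz1]]].
have az12 : a \notin z1 ++ b :: z2 by rewrite -Ez.
have [_ _ az2] := notin_cat_cons az12.
(* Swapping the blocks of b z1 b (z2 a y) b moves its only a. *)
apply: (@notinL_triple _ b z1 (z2 ++ a :: y)).
  move=> E; have /(cat_sep_inj az12 az2) : (z1 ++ b :: z2) ++ a :: y = z2 ++ a :: y ++ b :: z1.
    by rewrite -catA E -catA.
  by move/(congr1 size); rewrite size_cat /=; lia.
by apply: (factor_inL (p := a :: x) (q := [::])); first by rewrite Et Ez; cat_norm.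
Qed.

Lemma interleaved_disj_left : disj x z.
Proof.
move=> g gx; apply/negP => gz.
have [P [P' [Ex _]]] := split_first gx; have [Q [Q' [Ez _]]] := split_first gz.
have := interleaved_notin_mid; move: ax bx; rewrite Ex Ez.
move=> /notin_cat_cons [_ _ aP'] /notin_cat_cons [_ _ bP'] /notin_cat_cons [_ _ bQ'].
apply: (@notinL_interleaved_sep _ g P' b Q (Q' ++ a :: y) bP').
- by rewrite mem_cat inE (negbTE bQ') eq_sym (negbTE ab) (negbTE by_).
- by move=> E; move: aP'; rewrite E mem_cat mem_head orbT.
by apply: (factor_inL (p := a :: P) (q := [::])); first by rewrite Et Ex Ez; cat_norm.
Qed.

Lemma interleaved_disj_right : disj z y.
Proof.
move=> g gz; apply/negP => gy.
have [P [P' [Ez gP]]] := split_first gz; have [Q [Q' [Ey gQ]]] := split_first gy.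
apply: (@notinL_interleaved_sep _ a (x ++ b :: P) g P' Q _ gQ).
- rewrite mem_cat inE (negbTE (disjC interleaved_disj_left gz)) (negbTE gP) orbF /=.
  by apply: contraNneq interleaved_notin_mid => <-.
- by move=> E; move: by_; rewrite Ey -E !mem_cat mem_head orbT.
apply: (factor_inL (p := [::]) (q := Q' ++ [:: b])); first by rewrite Et Ez Ey; cat_norm.
by case: (Q').
Qed.

Lemma interleaved_inL2 : x <> y -> inL2 t.
Proof.
move=> xy; left; exists a, b, x, y, z.
have Lx : inL x by apply: (factor_inL (p := [:: a]) (q := b :: z ++ a :: y ++ [:: b])).
have Ly : inL y.
  apply: (factor_inL (p := a :: x ++ b :: z ++ [:: a]) (q := [:: b])) => //.
  by rewrite Et; cat_norm.
have Lz : inL z.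
  apply: (factor_inL (p := a :: x ++ [:: b]) (q := a :: y ++ [:: b])) => //.
  by rewrite Et; cat_norm.
have dxy : disj x y.
  apply: (disj_blocks (N1 := z ++ [:: a]) (N2 := b :: z) _ Et) => //.
  by rewrite Et; cat_norm.
have := interleaved_notin_mid; have := interleaved_disj_left.
have := disjC interleaved_disj_right; have := neq_nil xy; have /eqP := ab.
by do !split.
Qed.

End InterleavedShape.

(* The competing trail leaves a by another edge, since the suffix d :: w is a
   proper factor, hence in L. *)
Lemma forbidden_first_branch : ~ inL t -> exists a d e w s,
  [/\ t = a :: d :: w, d != e & perm_eq (edges (a :: e :: s)) (edges t)].
Proof.
case Et: t => [|a w] notL; first by case: notL; left.
have [s sw ne] := notinL_witness notL.
case: w {notL} Et sw ne => [|d w] Et sw ne; first by case: s sw ne => // y s /perm_size.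
case: s sw ne => [/perm_size // | e s] sw ne.
exists a, d, e, w, s; split=> //; apply/eqP => de; subst e; apply: ne.
have /inL_cons uniq_dw : inL (d :: w).
  by apply: (factor_inL (p := [:: a]) (q := [::])); first by rewrite Et cats0.
by move: sw; rewrite !edges_cons2 perm_cons => /uniq_dw ->.
Qed.

Lemma inL2_triple_case a d e M X : t = M ++ a :: X ++ [:: a] -> head a M = a ->
  a \notin X -> (a, d) \in edges t -> (a, e) \in edges t -> d != e -> inL2 t.
Proof.
move=> Et hM aX ad ae de.
have one_succ : ~ {subset edges t <= edges (a :: X ++ [:: a])}.
  by move=> sub; move: de; rewrite (succ_cycle aX (sub _ ad)) (succ_cycle aX (sub _ ae)) eqxx.
have [M0 | M_ne] := eqVneq M [::]; first by case: one_succ; rewrite Et M0.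
have [M' [Y [EM hM' aY]]] := split_last_block hM M_ne.
have Et' : t = M' ++ a :: Y ++ a :: X ++ [:: a] by rewrite Et EM; cat_norm.
have [EYX | /eqP YX] := eqVneq Y X.
  subst Y; case: one_succ => f; rewrite Et' edges_cat_block mem_cat => /orP [| //].
  by apply: (block_edges Et' hM' aX); case: (X).
have Et'' : t = M' ++ (a :: Y ++ a :: X ++ [:: a]) ++ [::] by rewrite cats0.
have [M'0 _] := forbidden_factor Et'' (notinL_triple_sep aY aX YX).
by apply: (triple_inL2 _ aY aX YX); rewrite Et' M'0.
Qed.

Lemma inL2_interleaved_case a d e w s M X Z :
  t = a :: d :: w -> d != e -> perm_eq (edges (a :: e :: s)) (edges t) ->
  t = M ++ a :: X ++ a :: Z -> head a M = a -> a \notin X -> a \notin Z ->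
  Z != [::] -> inL2 t.
Proof.
move=> Et de st EtM hM aX aZ Z0.
have sub := block_edges EtM hM aX Z0.
have dX : d = head a X.
  apply: (succ_cycle aX (sub _ _)); apply: (first_edge_prefix (w := w) (q := Z)).
    by rewrite -Et EtM; cat_norm.
  by rewrite size_cat /= size_cat /=; lia.
have [eZ eZ_head] : e \in Z /\ e = head a Z.
  have : (a, e) \in edges t by rewrite -(perm_mem st) edges_cons2 mem_head.
  rewrite EtM edges_cat_block mem_cat => /orP [/sub /(succ_cycle aX) eX | aeZ].
    by move: de; rewrite dX eX eqxx.
  by split; [apply: mem_edges_tgt aeZ | apply: succ_fresh aZ aeZ].
have [u uX uZ] : exists2 u, u \in X & u \in Z.
  apply: (shared_letter (e := e) (s := s) _ EtM sub aZ eZ).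
    by move=> f f_es; rewrite -(perm_mem st) edges_cons2 inE f_es orbT.
  have : (a, d) \in edges (a :: e :: s) by rewrite (perm_mem st) Et edges_cons2 mem_head.
  rewrite edges_cons2 inE => /orP [/eqP [de'] | /mem_edges_src /mem_belast].
    by rewrite de' eqxx in de.
  by rewrite inE => /orP [/eqP ae | //]; move: aZ; rewrite ae eZ.
have [X1 [X2 [EX uX1]]] := split_first uX; have [Z1 [Z2 [EZ uZ1]]] := split_first uZ.
have X1Z1 : X1 <> Z1.
  by move=> E; move: de; rewrite dX eZ_head EX EZ E; case: (Z1) => [|? ?]; rewrite /= eqxx.
have Et' : t = M ++ (a :: X1 ++ u :: X2 ++ a :: Z1 ++ [:: u]) ++ Z2.
  by rewrite EtM EX EZ; cat_norm.
have [M0 Z20] := forbidden_factor Et' (notinL_interleaved_sep uX1 uZ1 X1Z1).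
move: aX aZ; rewrite EX EZ => /notin_cat_cons [aX1 au aX2] /notin_cat_cons [aZ1 _ _].
apply: (interleaved_inL2 _ au aX1 aX2 aZ1 uX1 uZ1 X1Z1).
by rewrite EtM EX EZ M0 Z20; cat_norm.
Qed.

Lemma min_forbidden_inL2 : ~ inL t -> inL2 t.
Proof.
move=> notL; have [a [d [e [w [s [Et de st]]]]]] := forbidden_first_branch notL.
have ae : (a, e) \in edges t by rewrite -(perm_mem st) edges_cons2 mem_head.
have ad : (a, d) \in edges t by rewrite Et edges_cons2 mem_head.
have a_dw : a \in d :: w.
  move: ae; rewrite Et edges_cons2 inE => /orP [/eqP [ed] | /mem_edges_src /mem_belast //].
  by rewrite ed eqxx in de.
have [M [X [Z [EtM hM aX aZ]]]] := last_two_occurrences a_dw; rewrite -Et in EtM.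
have [Z0 | Z_ne] := eqVneq Z [::].
  by apply: (inL2_triple_case (M := M) (X := X) _ hM aX ad ae de); rewrite EtM Z0.
exact: inL2_interleaved_case Et de st EtM hM aX aZ Z_ne.
Qed.

End MinimalForbidden.

Theorem theorem1 (T : finType) (r : seq T) : inL2 r <-> min_forbidden r.
Proof.
split; first exact: inL2_min_forbidden.
by case=> notL r_min; exact: min_forbidden_inL2 r_min notL.
Qed.
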